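(* Let $R$ be a commutative domain with unit, let $f\in R$ be nonzero and non-invertible, and let $S=R[u,v]/(uv-f)$. Then the images of $u$ and $v$ are irreducible elements of $S$.
   Context: A nonzero element $r$ of a domain is irreducible if it is not invertible and whenever $r=r_1r_2$, one of $r_1,r_2$ is invertible. *)

From HB Require Import structures.
From mathcomp Require Import all_boot all_order all_algebra.
Set Implicit Arguments. Unset Strict Implicit. Unset Printing Implicit Defensive.
Import GRing.Theory.
Local Open Scope ring_scope.

(* The bivariate polynomial ring R[u,v] is modelled as {poly {poly R}}:
   the inner variable is u, the outer variable is v. *)
Definition uvar (R : nzRingType) : {poly {poly R}} := 'X%:P.
Definition vvar (R : nzRingType) : {poly {poly R}} := 'X.

Definition uv_rel (R : comNzRingType) (f : R) : {poly {poly R}} :=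
  uvar R * vvar R - f%:P%:P.

Definition eqS (R : comNzRingType) (f : R) (p q : {poly {poly R}}) : Prop :=
  exists h : {poly {poly R}}, p - q = h * uv_rel f.

Definition unitS (R : comNzRingType) (f : R) (p : {poly {poly R}}) : Prop :=
  exists w : {poly {poly R}}, eqS f (p * w) 1.

Definition irreducibleS (R : comNzRingType) (f : R) (p : {poly {poly R}}) : Prop :=
  [/\ ~ eqS f p 0, ~ unitS f p &
      forall a b : {poly {poly R}}, eqS f p (a * b) -> unitS f a \/ unitS f b].

From HB Require Import structures.
From mathcomp Require Import all_boot all_order all_algebra.
From mathcomp Require Import ring zify.
Set Implicit Arguments.
Unset Strict Implicit.
Unset Printing Implicit Defensive.
Import GRing.Theory.
Local Open Scope ring_scope.

(* Map S to the fraction field of R[x] by u |-> x, v |-> f/x; this kills uv - f.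
   Every element of S is congruent to p0(u) + v p1(v), whose image is a Laurent
   polynomial in which the coefficient of x^-j is divisible by f^j, and which is
   congruent to a constant c when its image is c.  If u = ab in S, then
   x = phi(a) phi(b) forces phi(a) = c x^k and phi(b) = d x^(1-k) with cd = 1.
   A negative exponent would make f divide the unit c or d, so one exponent is
   0 and the corresponding factor is a unit.  The automorphism of S exchanging
   u and v transfers the result to v. *)

Section Congruence.

Variables (R : comNzRingType) (f : R).

Lemma eqS_refl p : eqS f p p.
Proof. by exists 0; rewrite subrr mul0r. Qed.

Lemma unitS_eqS p q : eqS f p q -> unitS f q -> unitS f p.
Proof.
move=> [h pq] [w [h' qw]]; exists w, (h * w + h').
have -> : p * w - 1 = (p - q) * w + (q * w - 1) by ring.
by rewrite pq qw; ring.
Qed.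

Lemma swapXY_uv_rel : swapXY (uv_rel f) = uv_rel f.
Proof.
rewrite /uv_rel /uvar /vvar rmorphB rmorphM /= swapXY_X swapXY_Y.
by rewrite swapXY_polyC map_polyC mulrC.
Qed.

Lemma swapXY_uvar : swapXY (uvar R) = vvar R.
Proof. exact: swapXY_Y. Qed.

Lemma eqS_swapXY p q : eqS f p q -> eqS f (swapXY p) (swapXY q).
Proof.
by case=> h pq; exists (swapXY h); rewrite -rmorphB pq rmorphM /= swapXY_uv_rel.
Qed.

Lemma unitS_swapXY p : unitS f p -> unitS f (swapXY p).
Proof. by case=> w /eqS_swapXY; rewrite rmorphM rmorph1; exists (swapXY w). Qed.

Lemma irreducibleS_swapXY p : irreducibleS f p -> irreducibleS f (swapXY p).
Proof.
case=> p_neq0 p_nunit p_irr; split.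
- by move/eqS_swapXY; rewrite swapXYK raddf0.
- by move/unitS_swapXY; rewrite swapXYK.
- move=> a b /eqS_swapXY; rewrite swapXYK rmorphM => /p_irr.
  by case=> /unitS_swapXY; rewrite swapXYK; [left | right].
Qed.

Definition nf (p0 p1 : {poly R}) : {poly {poly R}} := p0%:P + 'X * p1^:P.

Lemma eqS_nf p : exists p0 p1, eqS f p (nf p0 p1).
Proof.
elim/poly_ind: p => [|q c [q0 [q1 [h q_nf]]]].
  by exists 0, 0; rewrite /nf map_poly0 polyC0 mulr0 addr0; apply: eqS_refl.
have [r [d q0E]] : exists r d, q0 = r * 'X + d%:P.
  by elim/poly_ind: q0 {q_nf} => [|r d _]; [exists 0, 0; rewrite mul0r add0r | exists r, d].
(* In (q0(u) + v q1(v)) v + c(u), the term r(u) u v of q0(u) v becomes f r(u). *)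
exists (r * f%:P + c), (q1 * 'X + d%:P), (h * 'X + r%:P).
have -> : q = h * uv_rel f + nf q0 q1 by rewrite -q_nf subrK.
rewrite q0E /nf /uv_rel /uvar /vvar !rmorphD !rmorphM /= map_polyX map_polyC /=.
ring.
Qed.

End Congruence.

Lemma unitS_polyC (R : comUnitRingType) (f c : R) :
  c \is a GRing.unit -> unitS f c%:P%:P.
Proof.
by move=> c_unit; exists c^-1%:P%:P, 0; rewrite -!rmorphM mulrV // subrr mul0r.
Qed.

Section MonomialFactors.

Variable R : idomainType.

Lemma monomial_factor m (A B : {poly R}) (d : R) :
  d != 0 -> A * B = d *: 'X^m -> exists a k, A = a *: 'X^k.
Proof.
move=> d_neq0; elim: m A B => [|m IHm] A B AB.
  have /andP[/eqP/eq_leq/size1_polyC A_const _] : (size A == 1) && (size B == 1).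
    by rewrite -size_mul_eq1 AB expr0 alg_polyC size_polyC d_neq0.
  by exists A`_0, 0; rewrite expr0 alg_polyC.
have X_neq0 : ('X : {poly R}) != 0 by rewrite polyX_eq0.
have : A.[0] * B.[0] = 0 by rewrite -hornerM AB hornerZ hornerXn expr0n mulr0.
move/eqP; rewrite mulf_eq0 => /orP[] /eqP/rootP/factor_theorem[C].
  rewrite polyC0 subr0 => AE.
  have [|a [k CE]] := IHm C B.
    by apply: (mulIf X_neq0); rewrite mulrAC -AE AB exprSr scalerAl.
  by exists a, k.+1; rewrite AE CE exprSr scalerAl.
rewrite polyC0 subr0 => BE; apply: (IHm A C).
by apply: (mulIf X_neq0); rewrite -mulrA -BE AB exprSr scalerAl.
Qed.

Lemma monomial_factors m (A B : {poly R}) (d : R) :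
  d != 0 -> A * B = d *: 'X^m ->
  exists a b k l, [/\ A = a *: 'X^k, B = b *: 'X^l, a * b = d & (k + l = m)%N].
Proof.
move=> d_neq0 AB; have [a [k AE]] := monomial_factor d_neq0 AB.
have [b [l BE]] := monomial_factor d_neq0 (etrans (mulrC B A) AB).
exists a, b, k, l; have := congr1 (fun p : {poly R} => p`_m) AB.
rewrite {1}AE {1}BE -scalerAl -scalerAr scalerA -exprD !coefZ !coefXn eqxx mulr1.
case: eqP => [<- | _]; rewrite ?(mulr1, mulr0) => ab; first by split.
by move: d_neq0; rewrite -ab eqxx.
Qed.

End MonomialFactors.

Local Notation "p %:F" := (@FracField.tofrac _ p).

Section LaurentImage.

Variables (R : idomainType) (f : R).
Hypothesis f_neq0 : f != 0.
Implicit Types (a : {poly {poly R}}).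

Local Notation x := ('X%:F : {fraction {poly R}}).

Lemma tofracX_neq0 : x != 0.
Proof. by rewrite tofrac_eq0 polyX_eq0. Qed.

Fact evalS_comm : commr_rmorph (@FracField.tofrac {poly R}) (f%:P%:F / x).
Proof. by move=> p; apply: mulrC. Qed.

Definition evalS : {rmorphism {poly {poly R}} -> {fraction {poly R}}} :=
  horner_morph evalS_comm.

Lemma evalS_polyC p : evalS p%:P = p%:F.
Proof. exact: horner_morphC. Qed.

Lemma evalS_X : evalS 'X = f%:P%:F / x.
Proof. exact: horner_morphX. Qed.

Lemma evalS_uvar : evalS (uvar R) = x.
Proof. exact: evalS_polyC. Qed.

Lemma evalS_eqS p q : eqS f p q -> evalS p = evalS q.
Proof.
case=> h pq; apply/eqP; rewrite -subr_eq0 -rmorphB pq !rmorphM rmorphB rmorphM /=.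
rewrite evalS_uvar evalS_X !evalS_polyC mulrCA mulfV ?tofracX_neq0 //.
by rewrite mulr1 subrr mulr0.
Qed.

Definition cleared_nf n (p0 p1 : {poly R}) : {poly R} :=
  p0 * 'X^n + \poly_(i < n) (p1`_(n.-1 - i) * f ^+ (n - i)).

Lemma coef_cleared_nf_high n (p0 p1 : {poly R}) i :
  (cleared_nf n p0 p1)`_(n + i) = p0`_i.
Proof. by rewrite coefD coefMXn coef_poly ltnNge leq_addr /= addr0 addKn. Qed.

Lemma coef_cleared_nf_low n (p0 p1 : {poly R}) i : (i < n)%N ->
  (cleared_nf n p0 p1)`_i = p1`_(n.-1 - i) * f ^+ (n - i).
Proof. by move=> lt_i_n; rewrite coefD coefMXn coef_poly lt_i_n add0r. Qed.

Lemma evalS_nf n (p0 p1 : {poly R}) : (size p1 <= n)%N ->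
  evalS (nf p0 p1) * x ^+ n = (cleared_nf n p0 p1)%:F.
Proof.
move=> le_p1_n; rewrite /nf rmorphD rmorphM /= evalS_polyC evalS_X mulrDl.
rewrite /cleared_nf rmorphD rmorphM rmorphXn; congr (_ + _).
rewrite /evalS /horner_morph -map_poly_comp.
rewrite (horner_coef_wide _ (leq_trans (size_poly _ _) le_p1_n)).
under eq_bigr do rewrite coef_map.
rewrite poly_def rmorph_sum mulr_sumr mulr_suml (reindex_inj rev_ord_inj).
apply: eq_bigr => j _ /=.
have [m nE] : exists m, n = (m + j).+1 by exists (n - j.+1)%N; have := ltn_ord j; lia.
have -> : (n - j.+1 = m)%N by lia.
have -> : (n.-1 - j = m)%N by lia.
have -> : (n - j = m.+1)%N by lia.
have xnE : x ^+ n = x ^+ m.+1 * x ^+ j by rewrite -exprD addSn -nE.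
have fE : (f%:P)%:F = f%:P%:F / x * x by rewrite divfK ?tofracX_neq0.
rewrite xnE -mul_polyC polyCM polyC_exp !rmorphM !rmorphXn /= [in RHS]fE.
move: (f%:P%:F / x) => y; rewrite exprMn !exprS; ring.
Qed.

Lemma cleared_nf_eq a (p0 p1 C : {poly R}) n :
  eqS f a (nf p0 p1) -> evalS a * x ^+ n = C%:F ->
  cleared_nf (n + size p1) p0 p1 = C * 'X^(size p1).
Proof.
move=> a_nf aE; apply/eqP; rewrite -tofrac_eq -evalS_nf ?leq_addl //.
by rewrite -(evalS_eqS a_nf) exprD mulrA aE rmorphM rmorphXn.
Qed.

Lemma cleared_nf_monomial n (p0 p1 : {poly R}) c :
  (size p1 <= n)%N -> cleared_nf n p0 p1 = c *: 'X^n -> p0 = c%:P /\ p1 = 0.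
Proof.
move=> le_p1_n nfE; split; apply/polyP => i.
  rewrite -(coef_cleared_nf_high n p0 p1) nfE coefZ coefXn coefC.
  by case: i => [|i]; rewrite ?addn0 ?eqxx ?mulr1 // -[X in _ == X]addn0 eqn_add2l mulr0.
rewrite coef0; have [lt_i_n | le_n_i] := ltnP i n; last first.
  by rewrite nth_default // (leq_trans le_p1_n).
have lt_j_n : (n.-1 - i < n)%N by lia.
have := coef_cleared_nf_low p0 p1 lt_j_n.
rewrite nfE coefZ coefXn ltn_eqF // mulr0 subKn; last by lia.
by move/esym/eqP; rewrite mulf_eq0 expf_eq0 (negPf f_neq0) andbF orbF => /eqP.
Qed.

Lemma evalS_clear a : exists n (A : {poly R}), evalS a * x ^+ n = A%:F.
Proof.
have [p0 [p1 a_nf]] := eqS_nf f a.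
by exists (size p1), (cleared_nf (size p1) p0 p1); rewrite (evalS_eqS a_nf) evalS_nf.
Qed.

Lemma evalS_monomial_dvd a n c k :
  evalS a * x ^+ n = (c *: 'X^k)%:F -> (k < n)%N -> exists t, c = f * t.
Proof.
move=> aE lt_k_n; have [p0 [p1 a_nf]] := eqS_nf f a.
have := congr1 (fun p : {poly R} => p`_(k + size p1)) (cleared_nf_eq a_nf aE).
rewrite coef_cleared_nf_low ?ltn_add2r // coefMXn ltnNge leq_addl /= addnK.
rewrite coefZ coefXn eqxx mulr1 subnDr => <-.
exists (p1`_((n + size p1).-1 - (k + size p1)) * f ^+ (n - k).-1).
by rewrite mulrCA -exprS prednK ?subn_gt0.
Qed.

Lemma evalS_const a n c : evalS a * x ^+ n = (c *: 'X^n)%:F -> eqS f a c%:P%:P.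
Proof.
move=> aE; have [p0 [p1 a_nf]] := eqS_nf f a.
have [p0E p1E] : p0 = c%:P /\ p1 = 0.
  apply: (cleared_nf_monomial (leq_addl n (size p1))).
  by rewrite (cleared_nf_eq a_nf aE) -scalerAl -exprD.
by move: a_nf; rewrite p0E p1E /nf map_poly0 mulr0 addr0.
Qed.

Lemma irreducibleS_uvar : f \isn't a GRing.unit -> irreducibleS f (uvar R).
Proof.
move=> f_nunit; have f_ndvd_unit t s : f * t * s = 1 -> False.
  by move=> fts; move/negP: f_nunit; apply; apply/unitrPr; exists (t * s); rewrite mulrA.
split.
- by move/evalS_eqS; rewrite evalS_uvar rmorph0; apply/eqP/tofracX_neq0.
- case=> w /evalS_eqS; rewrite rmorphM rmorph1 /= evalS_uvar => xw.
  have [|t tE] := evalS_monomial_dvd (a := w) (n := 1) (c := 1) (k := 0) _ isT.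
    by rewrite expr1 mulrC xw scale1r expr0 rmorph1.
  by apply: (f_ndvd_unit t 1); rewrite mulr1 -tE.
move=> a b /evalS_eqS; rewrite rmorphM /= evalS_uvar => xab.
have [n [A aE]] := evalS_clear a; have [m [B bE]] := evalS_clear b.
have AB : A * B = 1 *: 'X^((n + m).+1).
  apply/eqP; rewrite -tofrac_eq scale1r !rmorphM rmorphXn /= -aE -bE.
  by rewrite mulrACA -xab exprS exprD.
have [c [d [k [l [AE BE cd kl]]]]] := monomial_factors (oner_neq0 _) AB.
rewrite {}AE in aE; rewrite {}BE in bE.
have [lt_k_n | le_n_k] := ltnP k n.
  have [t cE] := evalS_monomial_dvd aE lt_k_n.
  by case: (f_ndvd_unit t d); rewrite -cE.
have [lt_l_m | le_m_l] := ltnP l m.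
  have [t dE] := evalS_monomial_dvd bE lt_l_m.
  by case: (f_ndvd_unit t c); rewrite -dE mulrC.
have [kE | lE] : k = n \/ l = m by lia.
  left; rewrite {}kE in aE; apply: unitS_eqS (evalS_const aE) (unitS_polyC _ _).
  by apply/unitrPr; exists d.
right; rewrite {}lE in bE; apply: unitS_eqS (evalS_const bE) (unitS_polyC _ _).
by apply/unitrPr; exists c; rewrite mulrC.
Qed.

End LaurentImage.

Theorem lemma1p3 (R : idomainType) (f : R) (hf0 : f != 0)
  (hfu : f \isn't a GRing.unit) :
  irreducibleS f (uvar R) /\ irreducibleS f (vvar R).
Proof.
have u_irr := irreducibleS_uvar hf0 hfu.
by split=> //; rewrite -swapXY_uvar; apply: irreducibleS_swapXY.
Qed.
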